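(* Let $A=\{a_1<a_2<a_3<\cdots\}\subseteq\mathbb{N}$ be an infinite set with $\lambda(A)>1$. Then $\underline{\underline{d}}(A)=\underline{d}_\infty(A)=0$.
   Context: $\mathbb{N}=\{1,2,3,\dots\}$. For an infinite set $A=\{a_1<a_2<\cdots\}$, the gap density is $\lambda(A)=\limsup_{n\to\infty}\frac{a_{n+1}}{a_n}$. For $A\subseteq\mathbb{N}$ let $A(n)=|A\cap[1,n]|$; $\mathcal{D}$ is the collection of sets for which $d(A)=\lim_{n\to\infty}A(n)/n$ exists; $\underline{\underline{d}}(A)=\sup\{d(B);\ B\subseteq A,\ B\in\mathcal{D}\}$. For $\alpha\ge-1$ put $A_\alpha(n)=\sum_{k=1}^n\chi_A(k)k^\alpha$, $\mathbb{N}_\alpha(n)=\sum_{k=1}^nk^\alpha$, $\underline{d}_\alpha(A)=\liminf_{n\to\infty}\frac{A_\alpha(n)}{\mathbb{N}_\alpha(n)}$ and $\underline{d}_\infty(A)=\inf_{\alpha\ge-1}\underline{d}_\alpha(A)$. *)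

From Stdlib Require Import Reals ClassicalEpsilon.
From Coquelicot Require Import Coquelicot.
Open Scope R_scope.

(* Subsets of N = {1,2,...} are predicates on nat; index 0 is never counted. *)
Definition chi (A : nat -> Prop) (k : nat) : R :=
  if excluded_middle_informative (A k) then 1 else 0.

Definition Acount (A : nat -> Prop) (n : nat) : R :=
  sum_n_m (chi A) 1 n.

Definition gap_density (a : nat -> nat) : Rbar :=
  LimSup_seq (fun n => INR (a (S n)) / INR (a n)).

Definition lower_dd (A : nat -> Prop) : Rbar :=
  Lub_Rbar (fun x => exists B : nat -> Prop,
     (forall k, B k -> A k) /\ is_lim_seq (fun n => Acount B n / INR n) x).

Definition Acount_alpha (A : nat -> Prop) (alpha : R) (n : nat) : R :=
  sum_n_m (fun k => chi A k * Rpower (INR k) alpha) 1 n.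

Definition Ncount_alpha (alpha : R) (n : nat) : R :=
  sum_n_m (fun k => Rpower (INR k) alpha) 1 n.

Definition lower_d_alpha (A : nat -> Prop) (alpha : R) : Rbar :=
  LimInf_seq (fun n => Acount_alpha A alpha n / Ncount_alpha alpha n).

Definition lower_d_infty (A : nat -> Prop) : Rbar :=
  Glb_Rbar (fun x => exists alpha : R, -1 <= alpha /\ lower_d_alpha A alpha = Finite x).

From Stdlib Require Import Reals Arith Lra Lia Psatz ClassicalEpsilon.
From Coquelicot Require Import Coquelicot.
Open Scope R_scope.

(* Since lambda(A) > 1 there is q < 1 and arbitrarily large m <= q N with no
   element of A in (m, N].  Every counting function supported on A takes the
   same value at m and at N, so a subset B of A with density x satisfies
   x <= q x, forcing x = 0; and for alpha = p a natural number the ratio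
   A_p(N) / N_p(N) = A_p(m) / N_p(N) is at most (m / N)^p <= q^p, so the lower
   alpha-densities get arbitrarily small. *)

Lemma sum_n_m_le_loc (f g : nat -> R) n m :
  (forall k, (n <= k <= m)%nat -> f k <= g k) -> sum_n_m f n m <= sum_n_m g n m.
Proof.
  induction m as [|m IH]; intros H.
  - destruct n.
    + rewrite !sum_n_n. apply H; lia.
    + rewrite !sum_n_m_zero by lia. apply Rle_refl.
  - destruct (le_lt_dec n (S m)).
    + destruct (Nat.eq_dec n (S m)).
      * subst. rewrite !sum_n_n. apply H; lia.
      * rewrite !sum_n_Sm by lia. apply Rplus_le_compat.
        -- apply IH; intros; apply H; lia.
        -- apply H; lia.
    + rewrite !sum_n_m_zero by lia. apply Rle_refl.
Qed.

Lemma sum_n_m_nonneg (f : nat -> R) n m : (forall k, 0 <= f k) -> 0 <= sum_n_m f n m.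
Proof.
  intros H. assert (E : sum_n_m (fun _ : nat => 0) n m = 0)
    by apply (sum_n_m_const_zero (G := R_AbelianMonoid)).
  rewrite <- E. apply sum_n_m_le. exact H.
Qed.

Lemma sum_n_m_shift (f : nat -> R) d n m :
  sum_n_m (fun k => f (k + d)%nat) n m = sum_n_m f (n + d) (m + d).
Proof.
  revert f. induction d as [|d IH]; intros f.
  - rewrite !Nat.add_0_r. apply sum_n_m_ext. intros; now rewrite Nat.add_0_r.
  - replace (n + S d)%nat with (S (n + d)) by lia.
    replace (m + S d)%nat with (S (m + d)) by lia.
    rewrite <- sum_n_m_S, <- (IH (fun j => f (S j))).
    apply sum_n_m_ext. intros; f_equal; lia.
Qed.

Lemma sum_pow_pos p N : (1 <= N)%nat -> 0 < sum_n_m (fun k => INR k ^ p) 1 N.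
Proof.
  intros HN. rewrite (sum_n_m_Chasles _ 1 1 N) by lia. change (plus ?x ?y) with (x + y).
  rewrite sum_n_n, pow1.
  assert (0 <= sum_n_m (fun k => INR k ^ p) 2 N).
  { apply sum_n_m_nonneg. intros; apply pow_le, pos_INR. }
  lra.
Qed.

(* Comparing 1..m with the top block N-m+1..N termwise: (k + N - m) / k >= N / m. *)
Lemma sum_pow_cross_le (p m N : nat) : (1 <= m <= N)%nat ->
  INR N ^ p * sum_n_m (fun k => INR k ^ p) 1 m <=
  INR m ^ p * sum_n_m (fun k => INR k ^ p) 1 N.
Proof.
  intros Hm.
  rewrite (sum_n_m_Chasles _ 1 (N - m) N) by lia. change (plus ?x ?y) with (x + y).
  assert (Hlow : 0 <= sum_n_m (fun k => INR k ^ p) 1 (N - m)).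
  { apply sum_n_m_nonneg. intros; apply pow_le, pos_INR. }
  assert (Hm0 : 0 <= INR m ^ p) by (apply pow_le, pos_INR).
  assert (Htop : sum_n_m (fun k => INR k ^ p) (S (N - m)) N =
                 sum_n_m (fun k => INR (k + (N - m)) ^ p) 1 m).
  { rewrite (sum_n_m_shift (fun k => INR k ^ p)). f_equal; lia. }
  rewrite Htop.
  enough (INR N ^ p * sum_n_m (fun k => INR k ^ p) 1 m <=
          INR m ^ p * sum_n_m (fun k => INR (k + (N - m)) ^ p) 1 m) by nra.
  rewrite <- !(sum_n_m_mult_l (K := R_Ring)).
  apply sum_n_m_le_loc. intros k Hk. change mult with Rmult.
  rewrite <- !Rpow_mult_distr. apply pow_incr. split.
  - apply Rmult_le_pos; apply pos_INR.
  - rewrite <- !mult_INR. apply le_INR. nia.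
Qed.

Lemma sum_pow_ratio_le (p m N : nat) : (1 <= m <= N)%nat ->
  sum_n_m (fun k => INR k ^ p) 1 m / sum_n_m (fun k => INR k ^ p) 1 N <=
  (INR m / INR N) ^ p.
Proof.
  intros Hm. pose proof (sum_pow_cross_le p m N Hm) as Hcross.
  pose proof (sum_pow_pos p N ltac:(lia)) as HSN.
  assert (HNp : 0 < INR N ^ p) by (apply pow_lt, lt_0_INR; lia).
  unfold Rdiv at 2. rewrite Rpow_mult_distr, pow_inv.
  apply Rmult_le_reg_r with (INR N ^ p * sum_n_m (fun k => INR k ^ p) 1 N).
  { now apply Rmult_lt_0_compat. }
  field_simplify; lra.
Qed.

Lemma Rdiv_nonneg x y : 0 <= x -> 0 <= y -> 0 <= x / y.
Proof.
  intros Hx Hy. destruct (Req_dec y 0) as [->|Hy0].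
  - unfold Rdiv. rewrite Rinv_0. lra.
  - apply Rdiv_le_0_compat; lra.
Qed.

Lemma LimInf_seq_nonneg (u : nat -> R) l :
  (forall n, 0 <= u n) -> LimInf_seq u = Finite l -> 0 <= l.
Proof.
  intros Hu E. destruct (ex_LimInf_seq u) as [l' H].
  rewrite (is_LimInf_seq_unique _ _ H) in E. subst l'.
  destruct (Rle_lt_dec 0 l) as [|Hl]; [easy|].
  assert (He : 0 < - l / 2) by lra.
  destruct (proj1 (H (mkposreal _ He)) O) as [n [_ Hn]].
  simpl in Hn. specialize (Hu n). lra.
Qed.

Lemma LimInf_seq_frequently_le (u : nat -> R) b : (forall n, 0 <= u n) ->
  (forall K, exists n, (K <= n)%nat /\ u n <= b) ->
  exists l, LimInf_seq u = Finite l /\ l <= b.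
Proof.
  intros Hu Hb. destruct (ex_LimInf_seq u) as [l H].
  rewrite (is_LimInf_seq_unique _ _ H). destruct l as [l| |].
  - exists l; split; [easy|].
    destruct (Rle_lt_dec l b) as [|Hl]; [easy|].
    assert (He : 0 < (l - b) / 2) by lra.
    destruct (H (mkposreal _ He)) as [_ [N HN]].
    destruct (Hb N) as [n [Hn Hnb]]. specialize (HN n Hn). simpl in HN. lra.
  - destruct (H b) as [N HN]. destruct (Hb N) as [n [Hn Hnb]].
    specialize (HN n Hn). lra.
  - destruct (H (-1) O) as [n [_ Hn]]. specialize (Hu n). lra.
Qed.

Lemma filterlim_ge_id (phi : nat -> nat) :
  (forall K, (K <= phi K)%nat) -> filterlim phi eventually eventually.
Proof.
  intros Hphi P [M HM]. exists M. intros n Hn. apply HM. specialize (Hphi n). lia.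
Qed.

Lemma Lub_Rbar_max (E : R -> Prop) x :
  E x -> (forall y, E y -> y <= x) -> Lub_Rbar E = Finite x.
Proof.
  intros Ex Hub. apply is_lub_Rbar_unique. split.
  - intros y Ey. apply Hub, Ey.
  - intros b Hb. apply Hb, Ex.
Qed.

Lemma Glb_Rbar_zero (E : R -> Prop) :
  (forall y, E y -> 0 <= y) -> (forall eps, 0 < eps -> exists y, E y /\ y < eps) ->
  Glb_Rbar E = Finite 0.
Proof.
  intros Hlb Hsmall. apply is_glb_Rbar_unique. split.
  - intros y Ey. apply Hlb, Ey.
  - intros b Hb. destruct b as [b| |]; simpl; try easy.
    + destruct (Rle_lt_dec b 0) as [|Hb0]; [easy|].
      destruct (Hsmall b Hb0) as [y [Ey Hy]]. specialize (Hb y Ey). simpl in Hb. lra.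
    + destruct (Hsmall 1 Rlt_0_1) as [y [Ey _]]. exact (Hb y Ey).
Qed.

Lemma chi_notin (B : nat -> Prop) k : ~ B k -> chi B k = 0.
Proof. intros H. unfold chi. destruct excluded_middle_informative; tauto. Qed.

Lemma chi_bounds (B : nat -> Prop) k : 0 <= chi B k <= 1.
Proof. unfold chi. destruct excluded_middle_informative; lra. Qed.

Lemma Ncount_alpha_nat (p n : nat) :
  Ncount_alpha (INR p) n = sum_n_m (fun k => INR k ^ p) 1 n.
Proof.
  apply sum_n_m_ext_loc. intros k Hk. apply Rpower_pow, lt_0_INR. lia.
Qed.

Lemma Acount_alpha_le_Ncount_alpha (A : nat -> Prop) alpha n :
  Acount_alpha A alpha n <= Ncount_alpha alpha n.
Proof.
  apply sum_n_m_le. intros k.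
  pose proof (chi_bounds A k). pose proof (exp_pos (alpha * ln (INR k))).
  unfold Rpower. nra.
Qed.

Lemma Acount_alpha_ratio_nonneg (A : nat -> Prop) alpha n :
  0 <= Acount_alpha A alpha n / Ncount_alpha alpha n.
Proof.
  assert (Hpow : forall k, 0 <= Rpower (INR k) alpha) by (intros; left; apply exp_pos).
  apply Rdiv_nonneg; apply sum_n_m_nonneg; [|easy].
  intros k. apply Rmult_le_pos; [apply chi_bounds|apply Hpow].
Qed.

Lemma gap_density_frequent_jump (a : nat -> nat) :
  (forall n, (0 < a n)%nat) -> Rbar_lt (Finite 1) (gap_density a) ->
  exists c, 1 < c /\ forall K, exists n, (K <= n)%nat /\ c * INR (a n) < INR (a (S n)).
Proof.
  intros Hpos Hlam. unfold gap_density in Hlam.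
  set (u := fun n => INR (a (S n)) / INR (a n)) in Hlam.
  assert (Hjump : forall c n, c < u n -> c * INR (a n) < INR (a (S n))).
  { intros c n Hn. assert (0 < INR (a n)) by (apply lt_0_INR, Hpos).
    unfold u in Hn. apply (Rmult_lt_compat_r (INR (a n))) in Hn; [|easy].
    unfold Rdiv in Hn. rewrite Rmult_assoc, Rinv_l in Hn; lra. }
  destruct (ex_LimSup_seq u) as [l H].
  rewrite (is_LimSup_seq_unique _ _ H) in Hlam.
  destruct l as [l| |]; simpl in Hlam; [|exists 2|easy].
  - exists ((1 + l) / 2). split; [lra|].
    assert (He : 0 < (l - 1) / 2) by lra.
    intros K. destruct (proj1 (H (mkposreal _ He)) K) as [n [Hn Hun]].
    exists n. split; [easy|]. apply Hjump. simpl in Hun. lra.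
  - split; [lra|]. intros K. destruct (H 2 K) as [n [Hn Hun]].
    exists n. split; [easy|]. now apply Hjump.
Qed.

(* (m K, N K] plays the role of the paper's gap (a_n, a_{n+1}); [K <= m K] makes
   both m and N usable as subsequences. *)
Definition relative_gaps (A : nat -> Prop) (q : R) (m N : nat -> nat) : Prop :=
  forall K, (K <= m K)%nat /\ (1 <= m K <= N K)%nat /\
    INR (m K) <= q * INR (N K) /\ forall k, (m K < k <= N K)%nat -> ~ A k.

Section Enumeration.

Variables (A : nat -> Prop) (a : nat -> nat).
Hypothesis a_incr : forall n, (a n < a (S n))%nat.
Hypothesis a0_pos : (1 <= a 0)%nat.
Hypothesis A_range : forall k, A k <-> exists n, a n = k.

Lemma enumeration_le n1 n2 : (n1 <= n2)%nat -> (a n1 <= a n2)%nat.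
Proof. induction 1 as [|n2 _ IH]; [lia|]. specialize (a_incr n2). lia. Qed.

Lemma enumeration_ge_succ n : (S n <= a n)%nat.
Proof. induction n as [|n IH]; [easy|]. specialize (a_incr n). lia. Qed.

Lemma enumeration_gap n k : (a n < k < a (S n))%nat -> ~ A k.
Proof.
  intros Hk [j <-]%A_range.
  destruct (le_lt_dec j n) as [Hj|Hj].
  - pose proof (enumeration_le j n Hj). lia.
  - pose proof (enumeration_le (S n) j Hj). lia.
Qed.

(* Take m = a_n and N = a_{n+1} - 1 at a jump c a_n < a_{n+1} with a_n >= 2/(c-1);
   then m <= q N for q = 2 / (1 + c). *)
Lemma enumeration_relative_gaps :
  Rbar_lt (Finite 1) (gap_density a) ->
  exists q m N, q < 1 /\ relative_gaps A q m N.
Proof.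
  intros Hlam.
  assert (Hpos : forall n, (0 < a n)%nat) by (intro n; pose proof (enumeration_ge_succ n); lia).
  destruct (gap_density_frequent_jump a Hpos Hlam) as [c [Hc Hjump]].
  destruct (nfloor_ex (2 / (c - 1))) as [K0 [_ HK0]].
  { apply Rlt_le, Rdiv_lt_0_compat; lra. }
  set (n K := proj1_sig (constructive_indefinite_description _ (Hjump (max K (S K0))))).
  assert (Hn : forall K, (max K (S K0) <= n K)%nat /\ c * INR (a (n K)) < INR (a (S (n K)))).
  { intros K. unfold n. apply proj2_sig. }
  exists (2 / (1 + c)), (fun K => a (n K)), (fun K => (a (S (n K)) - 1)%nat). split.
  { apply Rmult_lt_reg_r with (1 + c); [lra|]. field_simplify; lra. }
  intros K. destruct (Hn K) as [HnK Hjmp].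
  pose proof (enumeration_ge_succ (n K)). pose proof (a_incr (n K)).
  repeat split; try lia.
  - assert (Hbig : 2 <= INR (a (n K)) * (c - 1)).
    { assert (HK : 2 / (c - 1) <= INR (a (n K))).
      { apply Rle_trans with (INR (S K0)); [rewrite S_INR; lra|]. apply le_INR. lia. }
      replace 2 with (2 / (c - 1) * (c - 1)) at 1 by (field; lra).
      apply Rmult_le_compat_r; lra. }
    rewrite minus_INR by lia. simpl INR.
    apply Rmult_le_reg_r with (1 + c); [lra|].
    replace (2 / (1 + c) * (INR (a (S (n K))) - 1) * (1 + c))
      with (2 * (INR (a (S (n K))) - 1)) by (field; lra).
    nra.
  - intros k Hk. apply (enumeration_gap (n K)). lia.
Qed.

End Enumeration.

Section RelativeGaps.

Variables (A : nat -> Prop) (q : R) (m N : nat -> nat).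
Hypothesis q_lt1 : q < 1.
Hypothesis gaps : relative_gaps A q m N.

Lemma relative_gaps_nonneg : 0 <= q.
Proof.
  destruct (gaps O) as [_ [HmN [Hq _]]].
  assert (0 < INR (m O)) by (apply lt_0_INR; lia).
  assert (0 < INR (N O)) by (apply lt_0_INR; lia).
  destruct (Rle_lt_dec 0 q) as [|Hneg]; [easy|].
  assert (q * INR (N O) < 0) by (apply Rmult_neg_pos; easy). lra.
Qed.

Lemma sum_n_m_relative_gap (g : nat -> R) K :
  (forall k, ~ A k -> g k = 0) -> sum_n_m g 1 (N K) = sum_n_m g 1 (m K).
Proof.
  intros Hg. destruct (gaps K) as [_ [HmN [_ Hgap]]].
  rewrite (sum_n_m_Chasles g 1 (m K) (N K)) by lia.
  rewrite (sum_n_m_ext_loc g (fun _ => zero) (S (m K)) (N K)).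
  - now rewrite sum_n_m_const_zero, plus_zero_r.
  - intros k Hk. apply Hg, Hgap. lia.
Qed.

Lemma density_subset_relative_gaps (B : nat -> Prop) (x : R) :
  (forall k, B k -> A k) -> is_lim_seq (fun n => Acount B n / INR n) x -> x = 0.
Proof.
  intros HBA Hlim. set (u := fun n => Acount B n / INR n) in Hlim.
  assert (Hu0 : forall n, 0 <= u n).
  { intros n. apply Rdiv_nonneg.
    - apply sum_n_m_nonneg. intros; apply chi_bounds.
    - apply pos_INR. }
  assert (Hgap : forall K, u (N K) <= q * u (m K)).
  { intros K. destruct (gaps K) as [_ [HmN [Hq _]]].
    assert (E : Acount B (N K) = Acount B (m K)).
    { apply sum_n_m_relative_gap. intros k HAk. apply chi_notin. auto. }
    assert (HC : 0 <= Acount B (m K)) by (apply sum_n_m_nonneg; intros; apply chi_bounds).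
    assert (0 < INR (m K)) by (apply lt_0_INR; lia).
    assert (0 < INR (N K)) by (apply lt_0_INR; lia).
    unfold u. rewrite E. apply Rmult_le_reg_r with (INR (m K) * INR (N K)); [nra|].
    field_simplify; nra. }
  assert (HlimN : is_lim_seq (fun K => u (N K)) x).
  { apply is_lim_seq_subseq; [|easy].
    apply filterlim_ge_id. intros K. destruct (gaps K). lia. }
  assert (Hlimm : is_lim_seq (fun K => q * u (m K)) (q * x)).
  { apply (is_lim_seq_scal_l _ q x), is_lim_seq_subseq; [|easy].
    apply filterlim_ge_id. intros K. apply (gaps K). }
  assert (Hxq : x <= q * x) by exact (is_lim_seq_le _ _ _ _ Hgap HlimN Hlimm).
  assert (Hx0 : 0 <= x) by exact (is_lim_seq_le _ _ _ _ Hu0 (is_lim_seq_const 0) Hlim).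
  apply Rle_antisym; nra.
Qed.

Lemma lower_d_alpha_nat_le (p : nat) :
  exists l, lower_d_alpha A (INR p) = Finite l /\ l <= q ^ p.
Proof.
  apply LimInf_seq_frequently_le; [apply Acount_alpha_ratio_nonneg|].
  intros K. destruct (gaps K) as [HKm [HmN [Hq _]]].
  exists (N K). split; [lia|].
  assert (E : Acount_alpha A (INR p) (N K) = Acount_alpha A (INR p) (m K)).
  { apply sum_n_m_relative_gap. intros k HAk. rewrite chi_notin; [ring|easy]. }
  rewrite E, Ncount_alpha_nat.
  pose proof (sum_pow_pos p (N K) ltac:(lia)) as HSN.
  apply Rle_trans with
    (sum_n_m (fun k => INR k ^ p) 1 (m K) / sum_n_m (fun k => INR k ^ p) 1 (N K)).
  { apply Rmult_le_compat_r; [now apply Rlt_le, Rinv_0_lt_compat|].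
    rewrite <- Ncount_alpha_nat. apply Acount_alpha_le_Ncount_alpha. }
  apply Rle_trans with ((INR (m K) / INR (N K)) ^ p); [now apply sum_pow_ratio_le|].
  apply pow_incr. split.
  - apply Rdiv_le_0_compat; [apply pos_INR|apply lt_0_INR; lia].
  - apply Rmult_le_reg_r with (INR (N K)); [apply lt_0_INR; lia|].
    field_simplify; [lra|apply not_0_INR; lia].
Qed.

Lemma lower_dd_relative_gaps : lower_dd A = Finite 0.
Proof.
  apply Lub_Rbar_max.
  - exists (fun _ => False). split; [tauto|].
    apply is_lim_seq_ext with (fun _ => 0); [|apply is_lim_seq_const].
    intros n. unfold Acount. rewrite (sum_n_m_ext_loc _ (fun _ => zero)).
    + rewrite sum_n_m_const_zero. change (zero : R) with 0. unfold Rdiv; ring.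
    + intros k _. now apply chi_notin.
  - intros x [B [HBA Hlim]]. rewrite (density_subset_relative_gaps B x HBA Hlim). lra.
Qed.

Lemma lower_d_infty_relative_gaps : lower_d_infty A = Finite 0.
Proof.
  apply Glb_Rbar_zero.
  - intros x [alpha [_ E]].
    exact (LimInf_seq_nonneg _ x (Acount_alpha_ratio_nonneg A alpha) E).
  - intros eps Heps.
    pose proof relative_gaps_nonneg as Hq0.
    destruct (pow_lt_1_zero q ltac:(rewrite Rabs_pos_eq; lra) eps Heps) as [p Hp].
    specialize (Hp p (Nat.le_refl p)). rewrite Rabs_pos_eq in Hp by (apply pow_le; lra).
    destruct (lower_d_alpha_nat_le p) as [l [E Hl]].
    exists l. split; [|lra].
    exists (INR p). split; [pose proof (pos_INR p); lra|easy].
Qed.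

End RelativeGaps.

Theorem proposition4p6 (A : nat -> Prop) (a : nat -> nat)
  (Ha_incr : forall n, (a n < a (S n))%nat)
  (Ha_pos : (1 <= a 0)%nat)
  (HA : forall k, A k <-> exists n, a n = k)
  (Hlam : Rbar_lt (Finite 1) (gap_density a)) :
  lower_dd A = Finite 0 /\ lower_d_infty A = Finite 0.
Proof.
  destruct (enumeration_relative_gaps A a Ha_incr Ha_pos HA Hlam)
    as [q [m [N [Hq1 Hgaps]]]].
  split.
  - exact (lower_dd_relative_gaps A q m N Hq1 Hgaps).
  - exact (lower_d_infty_relative_gaps A q m N Hq1 Hgaps).
Qed.
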